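(* Define $f:[0,1]\times[0,1]\to[0,1]$ by $$f(x,y)=\begin{cases} x, & \text{if } y\le \tfrac12 \text{ (and } x\in[0,1]\text{ arbitrary), or if } x\ge \tfrac12 \text{ (and } y\in[0,1]\text{ arbitrary)},\\ \tfrac12(2x)^{1+\varepsilon}, & \text{if } y=\tfrac12+\varepsilon \text{ with } \varepsilon>0 \text{ and } x\le\tfrac12.\end{cases}$$ Then $([0,1],f)$ is a topological quandle (with the standard topology on $[0,1]$).
   Context: A topological rack is a topological space $X$ with a map $f:X\times X\to X$ such that $f$ is continuous, for every $y\in X$ the right multiplication $R_y:X\to X$, $x\mapsto f(x,y)$, is a homeomorphism, and $f(f(x,y),z)=f(f(x,z),f(y,z))$ for all $x,y,z\in X$. A topological quandle is a topological rack which in addition satisfies $f(x,x)=x$ for all $x\in X$. *)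

From HB Require Import structures.
From mathcomp Require Import all_boot all_order all_algebra.
From mathcomp Require Import all_classical all_reals all_analysis.
Set Implicit Arguments. Unset Strict Implicit. Unset Printing Implicit Defensive.
Import Order.TTheory GRing.Theory Num.Theory.
Import numFieldNormedType.Exports.
Local Open Scope classical_set_scope.
Local Open Scope ring_scope.

Definition homeo_on (T : topologicalType) (A : set T) (h : T -> T) : Prop :=
  exists g : T -> T,
    [/\ (forall x, A x -> A (h x)) /\ (forall x, A x -> A (g x)),
        (forall x, A x -> g (h x) = x) /\ (forall x, A x -> h (g x) = x),
        {within A, continuous h} & {within A, continuous g}].

Definition topological_rack_on (T : topologicalType) (A : set T)
    (op : T -> T -> T) : Prop :=
  [/\ (forall x y, A x -> A y -> A (op x y)),
      {within A `*` A, continuous (fun p : T * T => op p.1 p.2)},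
      (forall y, A y -> homeo_on A (fun x => op x y)) &
      (forall x y z, A x -> A y -> A z ->
         op (op x y) z = op (op x z) (op y z))].

Definition topological_quandle_on (T : topologicalType) (A : set T)
    (op : T -> T -> T) : Prop :=
  topological_rack_on A op /\ (forall x, A x -> op x x = x).

(* The operation of the statement; with y = 1/2 + eps, 1 + eps = y + 1/2. *)
Definition fq (R : realType) (x y : R) : R :=
  if (y <= 2^-1) || (2^-1 <= x) then x
  else 2^-1 * powR (2 * x) (y + 2^-1).

From HB Require Import structures.
From mathcomp Require Import all_boot all_order all_algebra.
From mathcomp Require Import all_classical all_reals all_analysis.
Import Order.TTheory GRing.Theory Num.Theory.
Import numFieldNormedType.Exports.
Local Open Scope classical_set_scope.
Local Open Scope ring_scope.
Set Implicit Arguments. Unset Strict Implicit. Unset Printing Implicit Defensive.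

(* For y = 1/2 + eps, fq _ y is the map psi_c with c = 1 + eps (and c = 1 when
   y <= 1/2), where psi_c fixes [1/2, 1] and sends x < 1/2 to (2x)^c / 2.
   These maps form a multiplicative one-parameter group, psi_d o psi_c = psi_(cd)
   and psi_1 = id, so every fq _ y is a homeomorphism with inverse psi_(1/c).
   As psi_c preserves [0, 1/2) and fixes the rest, the exponent attached to
   fq y z is the one attached to y, and self-distributivity reduces to the
   commutativity of the product of exponents. Joint continuity comes from the
   continuity of (a, b) |-> a^b on [0, +oo) x (0, +oo), including at a = 0. *)

Section powR_continuity.
Context {R : realType} {T : topologicalType}.
Variables (phi e : T -> R) (t : T).
Hypotheses (phi_ge0 : forall s, 0 <= phi s) (e_t_gt0 : 0 < e t).
Hypotheses (phi_cont : {for t, continuous phi}) (e_cont : {for t, continuous e}).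

Lemma cvg_powR0 : phi t = 0 -> (fun s => powR (phi s) (e s)) @ t --> 0.
Proof.
move=> phi_t0; have phi_cvg0 : phi @ t --> 0 by rewrite -phi_t0.
apply/cvgr0Pnorm_lt => eps eps_gt0.
pose c := e t / 2; have c_gt0 : 0 < c by rewrite divr_gt0.
pose delta := Num.min 1 (powR eps c^-1).
have delta_gt0 : 0 < delta by rewrite lt_min ltr01 powR_gt0.
near=> s; rewrite ger0_norm ?powR_ge0//.
have phi_lt : phi s < delta by near: s; exact: cvgr_lt phi_cvg0 _ delta_gt0.
have c_lt : c < e s.
  by near: s; apply: cvgr_gt e_cont _ _; rewrite ltr_pdivrMr// ltr_pMr// ltr1n.
have [->|phi_neq0] := eqVneq (phi s) 0; first by rewrite powR0// gt_eqF// (lt_trans c_gt0).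
have phi_gt0 : 0 < phi s by rewrite lt_neqAle eq_sym phi_neq0 phi_ge0.
have phi_le1 : phi s <= 1 by rewrite ltW// (lt_le_trans phi_lt)// ge_min lexx.
(* on (0, 1], powR decreases in the exponent, so phi^e <= phi^c < eps *)
apply: (le_lt_trans (ger_powR _ (ltW c_lt))); first by rewrite phi_gt0 phi_le1.
have : phi s < powR eps c^-1 by rewrite (lt_le_trans phi_lt)// ge_min lexx orbT.
move=> /(gt0_ltr_powR c_gt0); rewrite -powRrM mulVf ?gt_eqF// powRr1 ?ltW//.
by apply; rewrite nnegrE ?powR_ge0.
Unshelve. all: by end_near.
Qed.

Lemma continuous_powR : {for t, continuous (fun s => powR (phi s) (e s))}.
Proof.
have [phi_t_gt0|] := ltP 0 (phi t); last first.
  move=> phi_t_le0; have phi_t0 : phi t = 0 by apply/le_anti; rewrite phi_t_le0 phi_ge0.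
  by rewrite /prop_for /continuous_at /= phi_t0 powR0 ?gt_eqF//; exact: cvg_powR0.
have exp_ln : {for t, continuous (fun s => expR (e s * ln (phi s)))}.
  apply: (continuous_comp (f := fun s => e s * ln (phi s))); last exact: continuous_expR.
  exact: continuousM e_cont (continuous_comp phi_cont (continuous_ln phi_t_gt0)).
rewrite /prop_for /continuous_at /= {2}/powR gt_eqF//.
apply: cvg_trans exp_ln; apply: near_eq_cvg; near=> s.
have : 0 < phi s by near: s; exact: cvgr_gt phi_cont _ phi_t_gt0.
by rewrite /powR => /gt_eqF ->.
Unshelve. all: by end_near.
Qed.

End powR_continuity.

Lemma homeo_on_eq (T : topologicalType) (A : set T) (f g : T -> T) :
  {in A, f =1 g} -> homeo_on A f -> homeo_on A g.
Proof.
move=> fg [h [[fA hA] [hf fh] f_cont h_cont]].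
have fgA x : A x -> f x = g x by move=> Ax; apply: fg; rewrite inE.
exists h; split => //.
- by split=> // x Ax; rewrite -fgA//; exact: fA.
- by split=> x Ax; rewrite -fgA//; [exact: hf | exact: fh | exact: hA].
- exact: subspace_eq_continuous f_cont.
Qed.

Section twist_quandle.
Variable R : realType.
Local Notation half := (2^-1 : R).

Definition clamp_half (x : R) := Num.max 0 (Num.min x half).

(* For [0 <= x], [twist c x] is [(2x)^c / 2] below [1/2] and [x] above; clamping
   gives a single formula that is visibly jointly continuous in [(c, x)]. *)
Definition twist (c x : R) := x - clamp_half x + half * powR (2 * clamp_half x) c.

Definition twist_exp (y : R) := Num.max y half + half.

Lemma clamp_half_id x : 0 <= x <= half -> clamp_half x = x.
Proof. by case/andP=> x_ge0 x_le; rewrite /clamp_half min_l// max_r. Qed.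

Lemma clamp_half_ge0 x : 0 <= clamp_half x.
Proof. by rewrite /clamp_half le_max lexx. Qed.

Lemma twist_small c x : 0 <= x <= half -> twist c x = half * powR (2 * x) c.
Proof. by move=> /clamp_half_id x_clamp; rewrite /twist x_clamp subrr add0r. Qed.

Lemma twist_large c x : half <= x -> twist c x = x.
Proof.
move=> x_ge; rewrite /twist /clamp_half min_r// max_r ?invr_ge0 ?ler0n//.
by rewrite mulfV ?pnatr_eq0// powR1 mulr1 subrK.
Qed.

Lemma twist1 x : 0 <= x -> twist 1 x = x.
Proof.
move=> x_ge0; have [x_le|/ltW] := leP x half; last exact: twist_large.
by rewrite twist_small ?x_ge0// powRr1 ?mulr_ge0// mulrA mulVf ?pnatr_eq0// mul1r.
Qed.

Lemma twist_small_lt_half c x : 0 < c -> 0 <= x < half -> 0 <= twist c x < half.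
Proof.
move=> c_gt0 /andP[x_ge0 x_lt]; rewrite twist_small; last by rewrite x_ge0 ltW.
rewrite mulr_ge0 ?invr_ge0 ?ler0n ?powR_ge0//=.
rewrite -[ltRHS]mulr1 ltr_pM2l ?invr_gt0 ?ltr0n//.
have [->|x_neq0] := eqVneq x 0; first by rewrite mulr0 powR0 ?gt_eqF.
rewrite [ltRHS](_ : _ = powR 1 c); last by rewrite powR1.
apply: gt0_ltr_powR; rewrite ?nnegrE ?mulr_ge0 ?ler01//.
by rewrite -ltr_pdivlMl ?ltr0n// mulr1.
Qed.

Lemma twistM c d x : 0 < c -> 0 < d -> 0 <= x ->
  twist d (twist c x) = twist (c * d) x.
Proof.
move=> c_gt0 d_gt0 x_ge0; have [x_lt|x_ge] := ltP x half; last by rewrite !twist_large.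
have /andP[tw_ge0 tw_lt] := twist_small_lt_half c_gt0 (introT andP (conj x_ge0 x_lt)).
rewrite twist_small ?tw_ge0 ?ltW// twist_small ?x_ge0 ?ltW//.
by rewrite mulrA mulfV ?pnatr_eq0// mul1r -powRrM twist_small ?x_ge0 ?ltW.
Qed.

Lemma twist_ge0 c x : 0 < c -> 0 <= x -> 0 <= twist c x.
Proof.
move=> c_gt0 x_ge0; have [x_lt|/twist_large->//] := ltP x half.
by have /andP[] := twist_small_lt_half c_gt0 (introT andP (conj x_ge0 x_lt)).
Qed.

Lemma twist_itv c x : 0 < c -> 0 <= x <= 1 -> 0 <= twist c x <= 1.
Proof.
move=> c_gt0 /andP[x_ge0 x_le1].
have [x_lt|x_ge] := ltP x half; last by rewrite twist_large// x_ge0 x_le1.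
have /andP[tw_ge0 tw_lt] := twist_small_lt_half c_gt0 (introT andP (conj x_ge0 x_lt)).
by rewrite tw_ge0 ltW// (lt_le_trans tw_lt)// invf_le1 ?ler1n// ltr0n.
Qed.

Lemma twist_exp_gt0 y : 0 < twist_exp y.
Proof. by rewrite /twist_exp ltr_wpDl ?le_max ?invr_ge0 ?ler0n ?orbT// invr_gt0 ltr0n. Qed.

Lemma twist_exp_small y : y <= half -> twist_exp y = 1.
Proof. by move=> y_le; rewrite /twist_exp max_r// -div1r -splitr. Qed.

Lemma continuous_clamp_half : continuous clamp_half.
Proof.
move=> x; apply: (@continuous_max _ _ (cst 0) (fun x => Num.min x half)).
  exact: cvg_cst.
by apply: (@continuous_min _ _ id (cst half)); last exact: cvg_cst.
Qed.

Lemma continuous_twist_exp : continuous twist_exp.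
Proof.
move=> y; apply: (@continuousD _ _ _ (fun y => Num.max y half) (cst half)).
  by apply: (@continuous_max _ _ id (cst half)); last exact: cvg_cst.
exact: cvg_cst.
Qed.

Lemma continuous_twist (T : topologicalType) (c a : T -> R) t :
  {for t, continuous c} -> {for t, continuous a} -> 0 < c t ->
  {for t, continuous (fun s => twist (c s) (a s))}.
Proof.
move=> c_cont a_cont c_t_gt0.
have clamp_cont : {for t, continuous (clamp_half \o a)}.
  by apply: continuous_comp a_cont _; exact: continuous_clamp_half.
apply: continuousD; first exact: continuousB.
apply: continuousM; first exact: cvg_cst.
apply: continuous_powR => //; last by apply: continuousM => //; exact: cvg_cst.
by move=> s; rewrite mulr_ge0 ?clamp_half_ge0.
Qed.

Lemma itv01P (x : R) : `[0, 1]%classic x <-> 0 <= x <= 1.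
Proof. by rewrite /= in_itv. Qed.

Lemma homeo_on_twist c : 0 < c -> homeo_on `[(0:R), 1] (twist c).
Proof.
have twist_cont d : 0 < d -> continuous (twist d).
  by move=> d_gt0 x; apply: (@continuous_twist _ (cst d) id) => //; exact: cvg_cst.
move=> c_gt0; have cV_gt0 : 0 < c^-1 by rewrite invr_gt0.
exists (twist c^-1); split.
- by split=> x /itv01P x01; apply/itv01P; exact: twist_itv.
- split=> x /itv01P /andP[x_ge0 _].
    by rewrite twistM// mulfV ?gt_eqF// twist1.
  by rewrite twistM// mulVf ?gt_eqF// twist1.
- exact/continuous_subspaceT/twist_cont.
- exact/continuous_subspaceT/twist_cont.
Qed.

Lemma fq_twist (x y : R) : 0 <= x -> fq x y = twist (twist_exp y) x.
Proof.
move=> x_ge0; rewrite /fq.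
have [x_lt|x_ge] := ltP x half; last by rewrite orbT twist_large.
have [y_le|y_gt] := leP y half; first by rewrite twist_exp_small// twist1.
by rewrite /= twist_small ?x_ge0 ?ltW// /twist_exp max_l// ltW.
Qed.

Lemma twist_exp_fq (y z : R) : 0 <= y -> twist_exp (fq y z) = twist_exp y.
Proof.
move=> y_ge0; rewrite fq_twist//.
have [y_lt|y_ge] := ltP y half; last by rewrite twist_large.
have /andP[_ tw_lt] := twist_small_lt_half (twist_exp_gt0 z) (introT andP (conj y_ge0 y_lt)).
by rewrite (twist_exp_small (ltW tw_lt)) (twist_exp_small (ltW y_lt)).
Qed.

Lemma fq_itv (x y : R) : 0 <= x <= 1 -> 0 <= fq x y <= 1.
Proof.
move=> x01; have /andP[x_ge0 _] := x01.
by rewrite fq_twist// twist_itv ?twist_exp_gt0.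
Qed.

Lemma fq_idem (x : R) : fq x x = x.
Proof. by rewrite /fq; case: leP => [|/ltW ->]; rewrite ?orbT. Qed.

Lemma fq_self_distributive (x y z : R) : 0 <= x -> 0 <= y ->
  fq (fq x y) z = fq (fq x z) (fq y z).
Proof.
move=> x_ge0 y_ge0; have fq_x_ge0 w : 0 <= fq x w.
  by rewrite fq_twist// twist_ge0 ?twist_exp_gt0.
rewrite (fq_twist z (fq_x_ge0 y)) (fq_twist (fq y z) (fq_x_ge0 z)) (twist_exp_fq z y_ge0).
rewrite !(fq_twist _ x_ge0) !twistM ?twist_exp_gt0//.
by rewrite mulrC.
Qed.

Lemma fq_continuous :
  {within [set p : R * R | 0 <= p.1], continuous (fun p => fq p.1 p.2)}.
Proof.
apply: (@subspace_eq_continuous _ _ _ (fun p : R * R => twist (twist_exp p.2) p.1)).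
  by move=> p; rewrite inE /= => p1_ge0; rewrite /from_subspace /= (fq_twist _ p1_ge0).
apply: continuous_subspaceT => p.
apply: (@continuous_twist _ (fun p : R * R => twist_exp p.2) fst); last exact: twist_exp_gt0.
- by apply: continuous_comp; [exact: cvg_snd | exact: continuous_twist_exp].
- exact: cvg_fst.
Qed.

Lemma homeo_on_fq y : homeo_on `[(0:R), 1] (fun x => fq x y).
Proof.
apply: homeo_on_eq (homeo_on_twist (twist_exp_gt0 y)).
by move=> x; rewrite inE => /itv01P/andP[x_ge0 _]; rewrite fq_twist.
Qed.

End twist_quandle.

Theorem mainTheorem1 (R : realType) :
  topological_quandle_on `[(0:R), 1] (@fq R).
Proof.
split; last by move=> x _; exact: fq_idem.
split.
- by move=> x y /itv01P x01 _; apply/itv01P; exact: fq_itv.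
- apply: continuous_subspaceW (@fq_continuous R).
  by move=> -[x y] [/itv01P/andP[]].
- by move=> y _; exact: homeo_on_fq.
- move=> x y z /itv01P/andP[x_ge0 _] /itv01P/andP[y_ge0 _] _.
  exact: fq_self_distributive.
Qed.
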